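(* Consider the polyhedron $\mathcal{F}$ of all $(y,x)\geq0$ satisfying the production, inventory and capacity constraints described in the context, where $u^{\mathrm{REC}}>0$ and $u^{\mathrm{CP}}>0$. Let $(\tilde{y},\tilde{x})$ be an extreme point of $\mathcal{F}$. Then for all $j\in\mathcal{J},l\in\mathcal{L},z\in\mathcal{Z}$, writing $Y_{z,l,j}=\sum_{n\in\mathcal{N}^{\mathrm{REC}}_l}\tilde{y}^{\mathrm{REC}}_{z,l,j,n}$, $$\#\{n\in\mathcal{N}^{\mathrm{REC}}_l:\tilde{y}^{\mathrm{REC}}_{z,l,j,n}=u^{\mathrm{REC}}\}\geq\Big\lceil\tfrac{Y_{z,l,j}}{u^{\mathrm{REC}}}\Big\rceil-1,\qquad \#\{n\in\mathcal{N}^{\mathrm{REC}}_l:\tilde{y}^{\mathrm{REC}}_{z,l,j,n}=0\}\geq|\mathcal{N}^{\mathrm{REC}}_l|-\Big\lceil\tfrac{Y_{z,l,j}}{u^{\mathrm{REC}}}\Big\rceil,$$ and for all $k\in\mathcal{K}^{\mathrm{CP}},l\in\mathcal{L},z\in\mathcal{Z}$, writing $Y_{z,l,k}=\sum_{n\in\mathcal{N}^{\mathrm{CP}}_{l,k}}\tilde{y}^{\mathrm{CP}}_{z,l,k,n}$, $$\#\{n\in\mathcal{N}^{\mathrm{CP}}_{l,k}:\tilde{y}^{\mathrm{CP}}_{z,l,k,n}=u^{\mathrm{CP}}\}\geq\Big\lceil\tfrac{Y_{z,l,k}}{u^{\mathrm{CP}}}\Big\rceil-1,\qquad \#\{n\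in\mathcal{N}^{\mathrm{CP}}_{l,k}:\tilde{y}^{\mathrm{CP}}_{z,l,k,n}=0\}\geq|\mathcal{N}^{\mathrm{CP}}_{l,k}|-\Big\lceil\tfrac{Y_{z,l,k}}{u^{\mathrm{CP}}}\Big\rceil.$$
   Context: Index sets (all finite): chemistries $\mathcal{I}$; recycling processes $\mathcal{J}$; materials $\mathcal{K}$ with cathode powders $\mathcal{K}^{\mathrm{CP}}\subseteq\mathcal{K}$; zones $\mathcal{Z}$; periods $\mathcal{T}=\{1,\dots,T\}$; planning periods $\mathcal{L}=\{1,\dots,L\}$ with $\{\mathcal{T}_l\}$ a partition of $\mathcal{T}$; stages with $\sigma_t$ the stage of $t\in\mathcal{T}\cup\{0\}$; finite nonempty node sets $\Omega_\sigma$; ancestor maps $a_\omega(t)\in\Omega_{\sigma_t}$ with $a_\omega(t)=\omega$ if $\omega\in\Omega_{\sigma_t}$; positive integers $N^{\mathrm{REC}}_l,N^{\mathrm{CP}}_{l,k}$ with $\mathcal{N}^{\mathrm{REC}}_l=\{1,\dots,N^{\mathrm{REC}}_l\}$, $\mathcal{N}^{\mathrm{CP}}_{l,k}=\{1,\dots,N^{\mathrm{CP}}_{l,k}\}$. Data: coefficients $\Delta^{\mathrm{NB}}_{i,k},\Delta^{\mathrm{CP}}_{k',k},\Delta^{\mathrm{MC}}_{k',k},\Delta^{\mathrm{REC}}_{k,i,j}$, demands $d_{\omega,z,t,i}$, supplies $s_{\omega,z,t,i}$, capacities $u^{\mathrm{REC}},u^{\mathrm{CP}}$. Variables (nonnegative),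 for $t\in\mathcal{T},z\in\mathcal{Z},\omega\in\Omega_{\sigma_t}$ (inventories also at $t=0$): $x^{\mathrm{NM,NB}}_{\omega,z,t,k},x^{\mathrm{RM,INV}}_{\omega,z,t,k},x^{\mathrm{RM,S}}_{\omega,z,t,k},x^{\mathrm{INV}}_{\omega,z,t,k}$ ($k\in\mathcal{K}$); $x^{\mathrm{INV,NB}},x^{\mathrm{CP,INV}}$ ($k\in\mathcal{K}^{\mathrm{CP}}$); $x^{\mathrm{NM,CP}},x^{\mathrm{MC,CP}},x^{\mathrm{INV,MC}}$ ($k\notin\mathcal{K}^{\mathrm{CP}}$); $x^{\mathrm{RB}}_{\omega,z,t,i}$; $x^{\mathrm{RB,RM}}_{\omega,z,t,i,j}$; $x^{\mathrm{TR,RM}}_{\omega,z,z',t,k},x^{\mathrm{TR,RB}}_{\omega,z,z',t,i}$ ($z'\neq z$); $y^{\mathrm{REC}}_{z,l,j,n}$ ($n\in\mathcal{N}^{\mathrm{REC}}_l$), $y^{\mathrm{CP}}_{z,l,k,n}$ ($k\in\mathcal{K}^{\mathrm{CP}},n\in\mathcal{N}^{\mathrm{CP}}_{l,k}$). Production constraints, for all $t\in\mathcal{T},z,\omega\in\Omega_{\sigma_t}$: $\sum_i\Delta^{\mathrm{NB}}_{i,k}d_{\omega,z,t,i}=x^{\mathrm{NM,NB}}_{\omega,z,t,k}+x^{\mathrm{INV,NB}}_{\omega,z,t,k}$ ($k\in\mathcal{K}^{\mathrm{CP}}$); $\sum_i\Delta^{\mathrm{NB}}_{i,k}d_{\omega,z,t,i}=x^{\mathrm{NM,NB}}_{\omega,z,t,k}$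 ($k\notin\mathcal{K}^{\mathrm{CP}}$); $\sum_{k'\in\mathcal{K}^{\mathrm{CP}}}\Delta^{\mathrm{CP}}_{k',k}x^{\mathrm{CP,INV}}_{\omega,z,t,k'}=x^{\mathrm{NM,CP}}_{\omega,z,t,k}+x^{\mathrm{MC,CP}}_{\omega,z,t,k}$ ($k\notin\mathcal{K}^{\mathrm{CP}}$); $\sum_{k'\notin\mathcal{K}^{\mathrm{CP}}}\Delta^{\mathrm{MC}}_{k',k}x^{\mathrm{MC,CP}}_{\omega,z,t,k'}=x^{\mathrm{INV,MC}}_{\omega,z,t,k}$ ($k\notin\mathcal{K}^{\mathrm{CP}}$); $x^{\mathrm{RM,INV}}_{\omega,z,t,k}+x^{\mathrm{RM,S}}_{\omega,z,t,k}=\sum_{i,j}\Delta^{\mathrm{REC}}_{k,i,j}x^{\mathrm{RB,RM}}_{\omega,z,t,i,j}$. Inventory constraints: $x^{\mathrm{RB}}_{\omega,z,0,i}=0$, $x^{\mathrm{INV}}_{\omega,z,0,k}=0$ for $\omega\in\Omega_{\sigma_0}$; for $t\in\mathcal{T}$ and $\omega'=a_\omega(t-1)$: $x^{\mathrm{RB}}_{\omega,z,t,i}=x^{\mathrm{RB}}_{\omega',z,t-1,i}+\sum_{z'\neq z}(x^{\mathrm{TR,RB}}_{\omega,z',z,t,i}-x^{\mathrm{TR,RB}}_{\omega,z,z',t,i})+s_{\omega,z,t,i}-\sum_jx^{\mathrm{RB,RM}}_{\omega,z,t,i,j}$; for $k\notin\mathcal{K}^{\mathrm{CP}}$: $x^{\mathrm{INV}}_{\omega,z,t,k}=x^{\mathrm{INV}}_{\omega',z,t-1,k}+\sum_{z'\neq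 z}(x^{\mathrm{TR,RM}}_{\omega,z',z,t,k}-x^{\mathrm{TR,RM}}_{\omega,z,z',t,k})+x^{\mathrm{RM,INV}}_{\omega,z,t,k}-x^{\mathrm{INV,MC}}_{\omega,z,t,k}$; for $k\in\mathcal{K}^{\mathrm{CP}}$: the same right-hand side but with $-x^{\mathrm{INV,MC}}_{\omega,z,t,k}$ replaced by $+x^{\mathrm{CP,INV}}_{\omega,z,t,k}-x^{\mathrm{INV,NB}}_{\omega,z,t,k}$. Capacity constraints: $\sum_{n\in\mathcal{N}^{\mathrm{REC}}_l}y^{\mathrm{REC}}_{z,l,j,n}\geq\sum_ix^{\mathrm{RB,RM}}_{\omega,z,t,i,j}$ and $\sum_{n\in\mathcal{N}^{\mathrm{CP}}_{l,k}}y^{\mathrm{CP}}_{z,l,k,n}\geq x^{\mathrm{CP,INV}}_{\omega,z,t,k}$ for all $t\in\mathcal{T}_l,\omega\in\Omega_{\sigma_t}$; the total capacities $\sum_ny^{\mathrm{REC}}_{z,l,j,n}$ and $\sum_ny^{\mathrm{CP}}_{z,l,k,n}$ are nondecreasing from $l-1$ to $l$ for $l\geq2$; $y^{\mathrm{REC}}_{z,l,j,n}\leq u^{\mathrm{REC}}$ and $y^{\mathrm{CP}}_{z,l,k,n}\leq u^{\mathrm{CP}}$. *)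

From HB Require Import structures.
From mathcomp Require Import all_boot all_order all_algebra.
From mathcomp Require Import reals.
Unset Implicit Arguments. Unset Strict Implicit. Unset Printing Implicit Defensive.
Import Order.TTheory GRing.Theory Num.Theory.
Local Open Scope ring_scope.

(* Time: the periods 0,1,...,T are 'I_T.+1.  The "real" periods T = {1..T}
   are represented by t : 'I_T, standing for period t+1 = tnext t; its
   predecessor period t is tprev t. *)
Definition tnext {T : nat} (t : 'I_T) : 'I_T.+1 := lift ord0 t.
Definition tprev {T : nat} (t : 'I_T) : 'I_T.+1 := widen_ord (leqnSn T) t.

Unset Implicit Arguments.
Record model (R : realType) := Model {
  chem : finType;
  proc : finType;
  mat : finType;
  KCP : {set mat};
  zone : finType;
  nT : nat;
  nL : nat;
  stage : finType;
  sigma : 'I_nT.+1 -> stage;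
  node : stage -> finType;
  node_nonempty : forall s, (0 < #|node s|)%N;
  anc : forall t : 'I_nT, node (sigma (tnext t)) -> node (sigma (tprev t));
        (* anc t w = a_w(t-1) for w in Omega_{sigma_t}, t = tnext t *)
  anc_id : forall (t : 'I_nT) (e : sigma (tnext t) = sigma (tprev t))
             (w : node (sigma (tnext t))), anc t w = ecast s (node s) e w;
  lof : 'I_nT -> 'I_nL;                   (* t \in T_(lof t): the partition *)
  lof_surj : forall l : 'I_nL, exists t, lof t = l;
  NREC : 'I_nL -> nat;
  NREC_pos : forall l, (0 < NREC l)%N;
  NCP : 'I_nL -> mat -> nat;
  NCP_pos : forall l k, (0 < NCP l k)%N;
  DNB : chem -> mat -> R;
  DCP : mat -> mat -> R;
  DMC : mat -> mat -> R;
  DREC : mat -> chem -> proc -> R;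
  dem : forall t : 'I_nT, node (sigma (tnext t)) -> zone -> chem -> R;
  sup : forall t : 'I_nT, node (sigma (tnext t)) -> zone -> chem -> R;
  uREC : R;
  uCP : R
}.
Arguments chem {R} m.
Arguments proc {R} m.
Arguments mat {R} m.
Arguments KCP {R} m.
Arguments zone {R} m.
Arguments nT {R} m.
Arguments nL {R} m.
Arguments stage {R} m.
Arguments sigma {R} m.
Arguments node {R} m.
Arguments node_nonempty {R} m.
Arguments anc {R} m.
Arguments anc_id {R} m.
Arguments lof {R} m.
Arguments lof_surj {R} m.
Arguments NREC {R} m.
Arguments NREC_pos {R} m.
Arguments NCP {R} m.
Arguments NCP_pos {R} m.
Arguments DNB {R} m.
Arguments DCP {R} m.
Arguments DMC {R} m.
Arguments DREC {R} m.
Arguments dem {R} m.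
Arguments sup {R} m.
Arguments uREC {R} m.
Arguments uCP {R} m.
Set Implicit Arguments.

Section Vars.
Variables (R : realType) (M : model R).

Definition cpmat := {k : mat M | k \in KCP M}.
Definition ncpmat := {k : mat M | k \notin KCP M}.
Definition zpair := {p : zone M * zone M | p.1 != p.2}.
Definition nd (t : 'I_(nT M)) := node M (sigma M (tnext t)).

Inductive var : Type :=
| NMNB (t : 'I_(nT M)) (w : nd t) (z : zone M) (k : mat M)
| RMINV (t : 'I_(nT M)) (w : nd t) (z : zone M) (k : mat M)
| RMS (t : 'I_(nT M)) (w : nd t) (z : zone M) (k : mat M)
| INV (t : 'I_(nT M).+1) (w : node M (sigma M t)) (z : zone M) (k : mat M)
| INVNB (t : 'I_(nT M)) (w : nd t) (z : zone M) (k : cpmat)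
| CPINV (t : 'I_(nT M)) (w : nd t) (z : zone M) (k : cpmat)
| NMCP (t : 'I_(nT M)) (w : nd t) (z : zone M) (k : ncpmat)
| MCCP (t : 'I_(nT M)) (w : nd t) (z : zone M) (k : ncpmat)
| INVMC (t : 'I_(nT M)) (w : nd t) (z : zone M) (k : ncpmat)
| RB (t : 'I_(nT M).+1) (w : node M (sigma M t)) (z : zone M) (i : chem M)
| RBRM (t : 'I_(nT M)) (w : nd t) (z : zone M) (i : chem M) (j : proc M)
| TRRM (t : 'I_(nT M)) (w : nd t) (p : zpair) (k : mat M)
        (* p = (z, z'): transport from z to z' *)
| TRRB (t : 'I_(nT M)) (w : nd t) (p : zpair) (i : chem M)
| YREC (z : zone M) (l : 'I_(nL M)) (j : proc M) (n : 'I_(NREC M l))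
| YCP (z : zone M) (l : 'I_(nL M)) (k : cpmat) (n : 'I_(NCP M l (val k))).

Arguments NMNB : clear implicits.
Arguments RMINV : clear implicits.
Arguments RMS : clear implicits.
Arguments INV : clear implicits.
Arguments INVNB : clear implicits.
Arguments CPINV : clear implicits.
Arguments NMCP : clear implicits.
Arguments MCCP : clear implicits.
Arguments INVMC : clear implicits.
Arguments RB : clear implicits.
Arguments RBRM : clear implicits.
Arguments TRRM : clear implicits.
Arguments TRRB : clear implicits.
Arguments YREC : clear implicits.
Arguments YCP : clear implicits.

Definition point := var -> R.

Definition capREC (x : point) z l j : R := \sum_(n < NREC M l) x (YREC z l j n).
Definition capCP (x : point) z l (k : cpmat) : R :=
  \sum_(n < NCP M l (val k)) x (YCP z l k n).

Definition netRB (x : point) t (w : nd t) z i : R :=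
  \sum_(p : zpair | (val p).2 == z) x (TRRB t w p i)
  - \sum_(p : zpair | (val p).1 == z) x (TRRB t w p i).
Definition netRM (x : point) t (w : nd t) z k : R :=
  \sum_(p : zpair | (val p).2 == z) x (TRRM t w p k)
  - \sum_(p : zpair | (val p).1 == z) x (TRRM t w p k).

Arguments netRB : clear implicits.
Arguments netRM : clear implicits.

Definition production (x : point) : Prop :=
  forall (t : 'I_(nT M)) (z : zone M) (w : nd t),
  [/\ forall k : cpmat,
        \sum_i DNB M i (val k) * dem M t w z i = x (NMNB t w z (val k)) + x (INVNB t w z k),
      forall k : ncpmat,
        \sum_i DNB M i (val k) * dem M t w z i = x (NMNB t w z (val k)),
      forall k : ncpmat,
        \sum_(k' : cpmat) DCP M (val k') (val k) * x (CPINV t w z k')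
          = x (NMCP t w z k) + x (MCCP t w z k),
      forall k : ncpmat,
        \sum_(k' : ncpmat) DMC M (val k') (val k) * x (MCCP t w z k')
          = x (INVMC t w z k)
    & forall k : mat M,
        x (RMINV t w z k) + x (RMS t w z k)
          = \sum_i \sum_j DREC M k i j * x (RBRM t w z i j)].

Definition inventory (x : point) : Prop :=
  (forall (w : node M (sigma M ord0)) (z : zone M),
      (forall i, x (RB ord0 w z i) = 0) /\ (forall k, x (INV ord0 w z k) = 0)) /\
  (forall (t : 'I_(nT M)) (z : zone M) (w : nd t),
   let w' := anc M t w in
   [/\ forall i : chem M,
         x (RB (tnext t) w z i) = x (RB (tprev t) w' z i) + netRB x t w z i + sup M t w z i
                        - \sum_j x (RBRM t w z i j),
       forall k : ncpmat,
         x (INV (tnext t) w z (val k)) = x (INV (tprev t) w' z (val k)) + netRM x t w z (val k)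
                               + x (RMINV t w z (val k)) - x (INVMC t w z k)
     & forall k : cpmat,
         x (INV (tnext t) w z (val k)) = x (INV (tprev t) w' z (val k)) + netRM x t w z (val k)
                               + x (RMINV t w z (val k)) + x (CPINV t w z k)
                               - x (INVNB t w z k)]).

Definition capacity (x : point) : Prop :=
  [/\ forall (t : 'I_(nT M)) (z : zone M) (w : nd t) (j : proc M),
        \sum_i x (RBRM t w z i j) <= capREC x z (lof M t) j,
      forall (t : 'I_(nT M)) (z : zone M) (w : nd t) (k : cpmat),
        x (CPINV t w z k) <= capCP x z (lof M t) k,
      forall (z : zone M) (l l' : 'I_(nL M)), val l' = (val l).+1 ->
        (forall j, capREC x z l j <= capREC x z l' j) /\
        (forall k, capCP x z l k <= capCP x z l' k),
      forall z l j (n : 'I_(NREC M l)), x (YREC z l j n) <= uREC M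
    & forall z l k (n : 'I_(NCP M l (val k))), x (YCP z l k n) <= uCP M].

Definition feasible (x : point) : Prop :=
  (forall v, 0 <= x v) /\ production x /\ inventory x /\ capacity x.

Definition extreme_point (F : point -> Prop) (x : point) : Prop :=
  F x /\ forall (y1 y2 : point) (lam : R), 0 < lam -> lam < 1 ->
    F y1 -> F y2 -> x = (fun v => lam * y1 v + (1 - lam) * y2 v) -> y1 = y2.

End Vars.

Arguments YREC {R M}.
Arguments YCP {R M}.
Arguments capREC {R M}.
Arguments capCP {R M}.
Arguments feasible {R M}.
Arguments extreme_point {R M}.
Arguments point {R}.

(* At an extreme point x, every capacity group ((z, l, j) for recycling,
   (z, l, k) for cathode powder) has at most one fractional module, i.e. one n
   with 0 < y_n < u.  Otherwise, for two fractional modules n1 <> n2, shifting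
   s from y_n2 to y_n1 keeps every capacity total, and y enters the constraints
   only through these totals and the bounds 0 <= y_n <= u; so for small |s|
   both shifted points are feasible and x is their midpoint.  Hence
   Y = u * #{y_n = u} + r with r = 0 or 0 < r < u, so
   ceil (Y / u) = #{y_n = u} + #{0 < y_n < u} <= #{y_n = u} + 1, and the
   modules split as #{y_n = u} + #{0 < y_n < u} + #{y_n = 0}. *)

From mathcomp Require Import all_boot all_order all_algebra.
From mathcomp Require Import reals.
From mathcomp Require Import ring lra zify.
From Stdlib Require Import FunctionalExtensionality.
Set Implicit Arguments.
Unset Strict Implicit.
Unset Printing Implicit Defensive.
Import Order.TTheory GRing.Theory Num.Theory.
Local Open Scope ring_scope.

Lemma ceil_natrD (R : archiRealFieldType) (n : nat) (r : R) :
  0 <= r <= 1 -> Num.ceil (n%:R + r) = (n + (0 < r)%R)%N.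
Proof.
move=> /andP[r_ge0 r_le1]; apply: ceil_def.
rewrite intrB -!pmulrn natrD.
case: (ltrP 0 r) => r0 /=; lra.
Qed.

Section SaturationCount.
Variables (R : archiRealFieldType) (I : finType) (f : I -> R) (u : R).
Hypotheses (u_gt0 : 0 < u) (f_box : forall i, 0 <= f i <= u).

Local Notation full := [set i | f i == u].
Local Notation frac := [set i | 0 < f i < u].
Local Notation idle := [set i | f i == 0].

Lemma setC_full : ~: full = frac :|: idle.
Proof.
apply/setP => i; rewrite !inE; move: (f_box i).
case: (ltgtP (f i) u) => [_|_|->]; rewrite ?andbT ?andbF //=.
  by rewrite le_eqVlt orbC eq_sym.
by rewrite (gt_eqF u_gt0).
Qed.

Lemma card_full_frac_idle : #|I| = (#|full| + #|frac| + #|idle|)%N.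
Proof.
have frac_idle0 : frac :&: idle = set0.
  by apply/setP => i; rewrite !inE; case: eqP => [->|_]; rewrite ?ltxx ?andbF.
by rewrite -addnA -cardsUI frac_idle0 cards0 addn0 -setC_full cardsC.
Qed.

Lemma sum_full_frac : \sum_i f i = #|full|%:R * u + \sum_(i in frac) f i.
Proof.
rewrite (bigID (mem full)) /= -sum1_card natr_sum mulr_suml.
congr (_ + _); first by apply: eq_bigr => i; rewrite inE mul1r; apply/eqP.
rewrite (eq_bigl (mem (frac :|: idle))) => [|i]; last by rewrite -in_setC setC_full.
rewrite (bigID (mem frac)) /= [X in _ + X]big1 ?addr0 => [|i]; last first.
  by rewrite in_setU; case: (i \in frac); rewrite //= inE andbT => /eqP ->.
by apply: eq_bigl => i; rewrite in_setU andb_idl // => ->.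
Qed.

Hypothesis frac_le1 : (#|frac| <= 1)%N.

Lemma ceil_sum_div : Num.ceil ((\sum_i f i) / u) = (#|full| + #|frac|)%N.
Proof.
rewrite sum_full_frac mulrDl mulfK ?gt_eqF //.
move: frac_le1; rewrite leq_eqVlt ltnS leqn0.
case/orP=> [/cards1P[i0 frac_i0]|/eqP/cards0_eq ->].
  have := set11 i0; rewrite -frac_i0 inE => /andP[fi0_gt0 fi0_lt].
  rewrite frac_i0 big_set1 cards1.
  by rewrite ceil_natrD ?divr_gt0 // divr_ge0 ?ltW //= ltr_pdivrMr // mul1r.
by rewrite big_set0 mul0r addr0 cards0 addn0 pmulrn intrKceil.
Qed.

Lemma card_full_idle_ceil :
  Num.ceil ((\sum_i f i) / u) - 1 <= (#|full| : int) /\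
  (#|I| : int) - Num.ceil ((\sum_i f i) / u) <= (#|idle| : int).
Proof. rewrite ceil_sum_div card_full_frac_idle; split; lia. Qed.

End SaturationCount.

Section GroupExchange.
Variables (R : realFieldType) (G : eqType) (N : G -> nat).
Variables (g : G) (n1 n2 : 'I_(N g)).

(* Slots are compared as naturals: slots of another group g' live in the
   different ordinal type 'I_(N g'). *)
Definition exch_at (g' : G) (n : nat) : R :=
  (g' == g)%:R * ((n == n1)%:R - (n == n2)%:R).

Lemma sum_exch_at (g' : G) : \sum_(n < N g') exch_at g' n = 0.
Proof.
rewrite -mulr_sumr; case: eqP => [->|_]; last by rewrite mul0r.
have sum_eq1 (m : 'I_(N g)) : \sum_(n < N g) (n == m :> nat)%:R = 1 :> R.
  rewrite (bigD1 m) //= eqxx big1 ?addr0 // => n nm.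
  by have -> : (n == m :> nat) = false := negbTE nm.
by rewrite sumrB !sum_eq1 subrr mulr0.
Qed.

Hypothesis n12 : n1 != n2.

Lemma exch_at_n1 : exch_at g n1 = 1.
Proof.
rewrite /exch_at !eqxx.
by have -> : (n1 == n2 :> nat) = false := negbTE n12; rewrite subr0 mulr1.
Qed.

Lemma exch_at_box (a : forall g', 'I_(N g') -> R) (u e : R) :
  (forall g' n, 0 <= a g' n <= u) ->
  (forall s, `|s| <= e -> (0 <= a g n1 + s <= u) && (0 <= a g n2 - s <= u)) ->
  forall s, `|s| <= e -> forall g' n, 0 <= a g' n + s * exch_at g' n <= u.
Proof.
move=> a_box slack s s_le g' n; rewrite /exch_at.
case: eqP => [eg|_]; last by rewrite mul0r mulr0 addr0.
subst g'; rewrite mul1r; have /andP[box1 box2] := slack s s_le.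
have [->|nn1] := eqVneq n n1.
  by have -> : (n1 == n2 :> nat) = false := negbTE n12; rewrite eqxx subr0 mulr1.
have -> : (n == n1 :> nat) = false := negbTE nn1.
have [->|nn2] := eqVneq n n2; first by rewrite eqxx sub0r mulrN1.
have -> : (n == n2 :> nat) = false := negbTE nn2.
by rewrite subrr mulr0 addr0.
Qed.

End GroupExchange.

Arguments exch_at {R G} N g n1 n2 g' n.
Arguments sum_exch_at {R G} N g n1 n2 g'.
Arguments exch_at_box {R G} N g {n1 n2} n12 {a u e}.

Lemma interior_slack (R : realFieldType) (a b u : R) :
  0 < a < u -> 0 < b < u ->
  exists2 e, 0 < e &
    forall s, `|s| <= e -> (0 <= a + s <= u) && (0 <= b - s <= u).
Proof.
move=> /andP[a_gt0 a_lt] /andP[b_gt0 b_lt].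
pose e := Num.min (Num.min a (u - a)) (Num.min b (u - b)).
exists e; first by rewrite !lt_min a_gt0 b_gt0 !subr_gt0 a_lt b_lt.
move=> s; rewrite ler_norml => /andP[s_ge s_le].
have := lexx e; rewrite {2}/e !le_min => /andP[/andP[e_a e_ua] /andP[e_b e_ub]].
by apply/andP; split; apply/andP; split; lra.
Qed.

Section CapacityShift.
Variables (R : realType) (M : model R) (x : point M).
Variable dR : forall (z : zone M) (l : 'I_(nL M)), proc M -> 'I_(NREC M l) -> R.
Variable dC :
  forall (z : zone M) (l : 'I_(nL M)) (k : cpmat M), 'I_(NCP M l (val k)) -> R.
Arguments dR : clear implicits.
Arguments dC : clear implicits.

Definition shift_caps (e : R) : point M := fun v =>
  match v with
  | YREC z l j n => x v + e * dR z l j n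
  | YCP z l k n => x v + e * dC z l k n
  | _ => x v
  end.

Hypothesis dR_sum0 : forall z l j, \sum_n dR z l j n = 0.
Hypothesis dC_sum0 : forall z l k, \sum_n dC z l k n = 0.

Lemma capREC_shift_caps e z l j : capREC (shift_caps e) z l j = capREC x z l j.
Proof. by rewrite /capREC big_split /= -mulr_sumr dR_sum0 mulr0 addr0. Qed.

Lemma capCP_shift_caps e z l k : capCP (shift_caps e) z l k = capCP x z l k.
Proof. by rewrite /capCP big_split /= -mulr_sumr dC_sum0 mulr0 addr0. Qed.

Lemma feasible_shift_caps e : feasible x ->
  (forall z l j n, 0 <= x (YREC z l j n) + e * dR z l j n <= uREC M) ->
  (forall z l k n, 0 <= x (YCP z l k n) + e * dC z l k n <= uCP M) ->
  feasible (shift_caps e).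
Proof.
move=> [x_ge0 [x_prod [x_inv [cap_rec cap_cp cap_mono _ _]]]] boxR boxC.
split; [|split; [exact: x_prod|split; [exact: x_inv|]]].
  case=> /= *; first [exact: x_ge0 | exact: proj1 (andP (boxR _ _ _ _))
                                   | exact: proj1 (andP (boxC _ _ _ _))].
split=> [t z w j|t z w k|z l l' ll'|z l j n|z l k n].
- by rewrite capREC_shift_caps; exact: cap_rec.
- by rewrite (capCP_shift_caps e z (lof M t) k); exact: cap_cp.
- have [mono_rec mono_cp] := cap_mono z l l' ll'.
  by split=> [j|k]; rewrite ?capREC_shift_caps ?(capCP_shift_caps e z _ k).
- by case/andP: (boxR z l j n).
- by case/andP: (boxC z l k n).
Qed.

Lemma extreme_shift_caps e : extreme_point feasible x -> 0 < e ->
  (forall s, `|s| <= e -> feasible (shift_caps s)) ->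
  (forall z l j n, dR z l j n = 0) /\ (forall z l k n, dC z l k n = 0).
Proof.
move=> [_ x_ext] e_gt0 feas.
have feas_pos : feasible (shift_caps e) by apply: feas; rewrite gtr0_norm.
have feas_neg : feasible (shift_caps (- e)) by apply: feas; rewrite normrN gtr0_norm.
have half_gt0 : 0 < 2^-1 :> R by rewrite invr_gt0.
have half_lt1 : 2^-1 < 1 :> R by rewrite invf_lt1 // ltr1n.
have x_mid : x = (fun v => 2^-1 * shift_caps e v + (1 - 2^-1) * shift_caps (- e) v).
  by apply: functional_extensionality => -[] * /=; field.
have shift_eq := x_ext _ _ _ half_gt0 half_lt1 feas_pos feas_neg x_mid.
have dir0 (a d : R) : a + e * d = a + - e * d -> d = 0.
  move/addrI/eqP; rewrite mulNr -addr_eq0 -mulr2n mulrn_eq0 mulf_eq0 /=.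
  by rewrite gt_eqF // => /eqP.
by split=> z l *; apply: dir0; [exact: (congr1 (fun y => y (YREC z l _ _)) shift_eq)
                            | exact: (congr1 (fun y => y (YCP z l _ _)) shift_eq)].
Qed.

End CapacityShift.

Section ExtremeFractional.
Variables (R : realType) (M : model R) (x : point M).
Hypothesis x_ext : extreme_point feasible x.

Lemma extreme_fracREC_le1 z l j :
  (#|[set n | (0 < x (YREC z l j n) < uREC M)%R]| <= 1)%N.
Proof.
have [x_ge0 [_ [_ [_ _ _ x_le_uREC x_le_uCP]]]] := proj1 x_ext.
apply/card_le1_eqP => n1 n2; rewrite !inE => frac1 frac2.
have [->//|n12] := eqVneq n1 n2; exfalso.
have [e e_gt0 slack] := interior_slack frac1 frac2.
pose N (g : zone M * 'I_(nL M) * proc M) := NREC M g.1.2.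
pose dR z' l' j' (n : 'I_(NREC M l')) : R := exch_at N (z, l, j) n1 n2 (z', l', j') n.
pose a g (n : 'I_(N g)) := x (YREC g.1.1 g.1.2 g.2 n).
have a_box g' n : 0 <= a g' n <= uREC M by rewrite /a x_ge0 x_le_uREC.
have dR_box := exch_at_box N (z, l, j) n12 a_box slack.
have feas s : `|s| <= e -> feasible (shift_caps x dR (fun _ _ _ _ => 0) s).
  move=> s_le; apply: feasible_shift_caps => //.
  - by move=> z' l' j'; exact: (sum_exch_at N (z, l, j) n1 n2 (z', l', j')).
  - by move=> *; exact: big1.
  - exact: proj1 x_ext.
  - by move=> z' l' j'; exact: (dR_box _ s_le (z', l', j')).
  - by move=> *; rewrite mulr0 addr0 x_ge0 x_le_uCP.
have [dR0 _] := extreme_shift_caps x_ext e_gt0 feas.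
by have := dR0 z l j n1; rewrite /dR exch_at_n1 // => /eqP; rewrite oner_eq0.
Qed.

Lemma extreme_fracCP_le1 z l k :
  (#|[set n | (0 < x (YCP z l k n) < uCP M)%R]| <= 1)%N.
Proof.
have [x_ge0 [_ [_ [_ _ _ x_le_uREC x_le_uCP]]]] := proj1 x_ext.
apply/card_le1_eqP => n1 n2; rewrite !inE => frac1 frac2.
have [->//|n12] := eqVneq n1 n2; exfalso.
have [e e_gt0 slack] := interior_slack frac1 frac2.
pose N (g : zone M * 'I_(nL M) * cpmat M) := NCP M g.1.2 (val g.2).
pose dC z' l' k' (n : 'I_(NCP M l' (val k'))) : R :=
  exch_at N (z, l, k) n1 n2 (z', l', k') n.
pose a g (n : 'I_(N g)) := x (YCP g.1.1 g.1.2 g.2 n).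
have a_box g' n : 0 <= a g' n <= uCP M by rewrite /a x_ge0 x_le_uCP.
have dC_box := exch_at_box N (z, l, k) n12 a_box slack.
have feas s : `|s| <= e -> feasible (shift_caps x (fun _ _ _ _ => 0) dC s).
  move=> s_le; apply: feasible_shift_caps => //.
  - by move=> *; exact: big1.
  - by move=> z' l' k'; exact: (sum_exch_at N (z, l, k) n1 n2 (z', l', k')).
  - exact: proj1 x_ext.
  - by move=> *; rewrite mulr0 addr0 x_ge0 x_le_uREC.
  - by move=> z' l' k'; exact: (dC_box _ s_le (z', l', k')).
have [_ dC0] := extreme_shift_caps x_ext e_gt0 feas.
by have := dC0 z l k n1; rewrite /dC exch_at_n1 // => /eqP; rewrite oner_eq0.
Qed.

End ExtremeFractional.

Theorem theorem1 (R : realType) (M : model R) (x : point M) :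
  0 < uREC M -> 0 < uCP M ->
  extreme_point (@feasible R M) x ->
  (forall (j : proc M) (l : 'I_(nL M)) (z : zone M),
     let Y := capREC x z l j in
     Num.ceil (Y / uREC M) - 1
       <= (#|[set n : 'I_(NREC M l) | x (YREC z l j n) == uREC M]| : int) /\
     (NREC M l : int) - Num.ceil (Y / uREC M)
       <= (#|[set n : 'I_(NREC M l) | x (YREC z l j n) == 0]| : int)) /\
  (forall (k : cpmat M) (l : 'I_(nL M)) (z : zone M),
     let Y := capCP x z l k in
     Num.ceil (Y / uCP M) - 1
       <= (#|[set n : 'I_(NCP M l (val k)) | x (YCP z l k n) == uCP M]| : int) /\
     (NCP M l (val k) : int) - Num.ceil (Y / uCP M)
       <= (#|[set n : 'I_(NCP M l (val k)) | x (YCP z l k n) == 0]| : int)).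
Proof.
move=> uREC_gt0 uCP_gt0 x_ext.
have [x_ge0 [_ [_ [_ _ _ x_le_uREC x_le_uCP]]]] := proj1 x_ext.
split=> [j l z | k l z] Y.
- have x_box n : 0 <= x (YREC z l j n) <= uREC M by rewrite x_ge0 x_le_uREC.
  have := card_full_idle_ceil uREC_gt0 x_box (extreme_fracREC_le1 x_ext z l j).
  by rewrite card_ord.
- have x_box n : 0 <= x (YCP z l k n) <= uCP M by rewrite x_ge0 x_le_uCP.
  have := card_full_idle_ceil uCP_gt0 x_box (extreme_fracCP_le1 x_ext z l k).
  by rewrite card_ord.
Qed.
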